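(* If $\iota\in\mathbb C$ satisfies $\iota^4=1$, then the balanced Chekhov–Fock algebra $\mathcal Z^\iota(\lambda)$ is commutative.
   Context: $S$ is a closed oriented surface $\bar S$ of genus $g$ minus $s\ge1$ points, $2-2g-s<0$; $\lambda$ is an ideal triangulation (triangulation of $\bar S$ with vertices exactly the removed points) with edges $\lambda_1,\dots,\lambda_n$. Let $a_{ij}\in\{0,1,2\}$ be the number of times an end of $\lambda_j$ immediately succeeds an end of $\lambda_i$ going counterclockwise around a puncture, $\sigma_{ij}=a_{ij}-a_{ji}$. For $\iota\in\mathbb C-\{0\}$, $\mathcal T^\iota(\lambda)$ is the algebra generated by $Z_i^{\pm1}$ with relations $Z_iZ_j=\iota^{2\sigma_{ij}}Z_jZ_i$, and the balanced Chekhov–Fock algebra $\mathcal Z^\iota(\lambda)$ is its subalgebra generated by the monomials $Z_1^{k_1}\cdots Z_n^{k_n}$ such that $k_{i_1}+k_{i_2}+k_{i_3}$ is even whenever $\lambda_{i_1},\lambda_{i_2},\lambda_{i_3}$ are the sides of a face of $\lambda$. *)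

From HB Require Import structures.
From mathcomp Require Import all_boot all_order all_algebra.
From mathcomp Require Import complex.
From mathcomp Require Import Rstruct.
From Stdlib Require Rdefinitions.


Import Order.TTheory GRing.Theory Num.Theory.
Local Open Scope ring_scope.

Definition C : Type := (Rdefinitions.R)[i].

(* An ideal triangulation lambda of S with edges lambda_0..lambda_{n-1} is   *)
(* described by its m faces; face f has three sides side f 0, side f 1,      *)
(* side f 2 (edge indices, with multiplicity, so self-folded faces allowed), *)
(* listed in counterclockwise order along the boundary of f for the          *)
(* orientation of S.  Two sides carrying the same edge are glued (in the     *)
(* orientation-reversing way), which produces the oriented surface.          *)
Record ideal_triangulation (n : nat) := IdealTriangulation {
  nfaces : nat;
  side : 'I_nfaces -> 'I_3 -> 'I_n
}.
Arguments nfaces {n} _.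
Arguments side {n} _ _ _.

Definition edges_twice {n} (lam : ideal_triangulation n) : Prop :=
  forall i : 'I_n,
    #|[set p : 'I_(nfaces lam) * 'I_3 | side lam p.1 p.2 == i]| = 2%N.

Definition face_adj {n} (lam : ideal_triangulation n) : rel 'I_(nfaces lam) :=
  fun f g => [exists c : 'I_3, exists d : 'I_3, side lam f c == side lam g d].

(* Well-formedness: a closed connected oriented surface is obtained, with    *)
(* vertices exactly the punctures; hyperbolicity 2-2g-s = #faces - #edges   *)
(* = -#faces/2 < 0 amounts to having at least one face.                      *)
Definition is_ideal_triangulation {n} (lam : ideal_triangulation n) : Prop :=
  [/\ edges_twice lam,
      (0 < nfaces lam)%N &
      forall f g : 'I_(nfaces lam), connect (face_adj lam) f g].

(* a_ij : number of times an end of lambda_j immediately succeeds an end of  *)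
(* lambda_i going counterclockwise around a puncture.  Each corner of a face *)
(* gives one such succession: at the corner of face f between side c and     *)
(* side c+1 (mod 3), going counterclockwise around the puncture, the end of  *)
(* side c immediately succeeds the end of side c+1.                          *)
Definition a_coef {n} (lam : ideal_triangulation n) (i j : 'I_n) : nat :=
  #|[set p : 'I_(nfaces lam) * 'I_3 |
      (side lam p.1 (ordS p.2) == i) && (side lam p.1 p.2 == j)]|.

Definition sigma {n} (lam : ideal_triangulation n) (i j : 'I_n) : int :=
  (a_coef lam i j)%:Z - (a_coef lam j i)%:Z.

Definition balanced {n} (lam : ideal_triangulation n) (k : 'I_n -> int) : Prop :=
  forall f : 'I_(nfaces lam),
    (2 %| \sum_(c < 3) k (side lam f c))%Z.

(* The Chekhov-Fock algebra T^iota(lambda) is the C-algebra presented by     *)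
(* generators Z_i^{+-1} and relations Z_i Z_j = iota^{2 sigma_ij} Z_j Z_i.  *)
(* We work with an arbitrary C-algebra A together with elements Z_i, Zinv_i  *)
(* satisfying these relations (the presented algebra being the universal    *)
(* such one).                                                                *)
Definition CF_relations {n} (lam : ideal_triangulation n) (iota : C)
    {A : algType C} (Z Zinv : 'I_n -> A) : Prop :=
  [/\ forall i, Z i * Zinv i = 1,
      forall i, Zinv i * Z i = 1 &
      forall i j, Z i * Z j = (iota ^ (2 * sigma lam i j)) *: (Z j * Z i)].

Definition zpow {n} {A : algType C} (Z Zinv : 'I_n -> A) (i : 'I_n) (k : int) : A :=
  match k with
  | Posz m => Z i ^+ m
  | Negz m => Zinv i ^+ m.+1
  end.

Definition monomial {n} {A : algType C} (Z Zinv : 'I_n -> A) (k : 'I_n -> int) : A :=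
  \prod_(i < n) zpow Z Zinv i (k i).

Inductive in_balanced_CF {n} (lam : ideal_triangulation n)
    {A : algType C} (Z Zinv : 'I_n -> A) : A -> Prop :=
  | bCF_mono k : balanced lam k -> in_balanced_CF lam Z Zinv (monomial Z Zinv k)
  | bCF_scal (c : C) : in_balanced_CF lam Z Zinv (c%:A)
  | bCF_add x y : in_balanced_CF lam Z Zinv x -> in_balanced_CF lam Z Zinv y ->
                  in_balanced_CF lam Z Zinv (x + y)
  | bCF_mul x y : in_balanced_CF lam Z Zinv x -> in_balanced_CF lam Z Zinv y ->
                  in_balanced_CF lam Z Zinv (x * y)
  | bCF_scale (c : C) x : in_balanced_CF lam Z Zinv x ->
                  in_balanced_CF lam Z Zinv (c *: x).

(* For monomials Z^k, Z^l the defining relations give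
   Z^k Z^l = iota^(2 s) Z^l Z^k with s = sum_(i,j) sigma_ij k_i l_j.  Reading
   sigma off the corners of the faces, s is a sum over faces of
   (sum_c k_c)(sum_c l_c) - sum_c k_c l_c - 2 sum_c k_c l_(c+1), c running over
   the three sides of the face.  For balanced k the first term is even, and
   the second, summed over all faces, counts every edge twice; hence s is even,
   iota^(2 s) = iota^(4 s/2) = 1, and a balanced monomial commutes with every
   monomial, hence with the whole balanced algebra. *)
From HB Require Import structures.
From mathcomp Require Import all_boot all_order all_algebra.
From mathcomp Require Import complex.
From mathcomp Require Import Rstruct.
From mathcomp Require Import ring.
Import GRing.Theory.

Local Open Scope ring_scope.

Section QCommute.
Local Set Implicit Arguments.
Local Unset Strict Implicit.
Variables (F : fieldType) (A : algType F) (q : F).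
Hypothesis q_neq0 : q != 0.

Definition qcommute (e : int) (u v : A) : Prop := u * v = q ^ e *: (v * u).

Lemma qcommute_exprl (e : int) (u v : A) (m : nat) :
  qcommute e u v -> qcommute (e * m%:Z) (u ^+ m) v.
Proof.
rewrite /qcommute -exprz_exp; move: (q ^ e) => d uv; rewrite -exprnP.
elim: m => [|m IH]; first by rewrite !expr0 mulr1 mul1r scale1r.
rewrite exprSr -mulrA uv -scalerAr (mulrA (u ^+ m)) IH -scalerAl scalerA.
by rewrite -exprS mulrA.
Qed.

Lemma qcommute_expr (e : int) (u v : A) (m p : nat) :
  qcommute e u v -> qcommute (e * (m * p)%N%:Z) (u ^+ m) (v ^+ p).
Proof.
move=> /(qcommute_exprl m); rewrite /qcommute PoszM mulrA => um_v.
rewrite -exprz_exp; move: (q ^ (e * m%:Z)) um_v => d um_v; rewrite -exprnP.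
elim: p => [|p IH]; first by rewrite !expr0 mulr1 mul1r scale1r.
rewrite exprSr mulrA IH -scalerAl -(mulrA _ (u ^+ m)) um_v -scalerAr scalerA mulrA.
by rewrite -(exprSr d).
Qed.

Lemma qcommute_invr (e : int) (x y y' : A) :
  y * y' = 1 -> y' * y = 1 -> qcommute e x y -> qcommute (- e) x y'.
Proof.
move=> yy' y'y xy.
have y'x : y' * x = q ^ e *: (x * y').
  transitivity (y' * (x * y) * y'); first by rewrite -!mulrA yy' mulr1.
  by rewrite xy -scalerAr -scalerAl !mulrA y'y mul1r.
by rewrite /qcommute y'x scalerA -exprzDr ?unitfE // addNr expr0z scale1r.
Qed.

Lemma qcommute_invl (e : int) (x x' y : A) :
  x * x' = 1 -> x' * x = 1 -> qcommute e x y -> qcommute (- e) x' y.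
Proof.
move=> xx' x'x xy.
have yx' : y * x' = q ^ e *: (x' * y).
  transitivity (x' * (x * y) * x'); first by rewrite !mulrA x'x mul1r.
  by rewrite xy -scalerAr -scalerAl -!mulrA xx' mulr1.
by rewrite /qcommute yx' scalerA -exprzDr ?unitfE // addNr expr0z scale1r.
Qed.

Lemma qcommute_prodr (I : Type) (r : seq I) (e : I -> int) (x : A) (g : I -> A) :
  (forall j, qcommute (e j) x (g j)) ->
  qcommute (\sum_(j <- r) e j) x (\prod_(j <- r) g j).
Proof.
rewrite /qcommute => xg; elim: r => [|a r IH].
  by rewrite !big_nil expr0z scale1r mulr1 mul1r.
rewrite !big_cons mulrA xg -scalerAl -(mulrA (g a) x) IH -scalerAr scalerA mulrA.
by rewrite -exprzDr ?unitfE.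
Qed.

Lemma qcommute_prodl (I : Type) (r : seq I) (e : I -> int) (f : I -> A) (y : A) :
  (forall i, qcommute (e i) (f i) y) ->
  qcommute (\sum_(i <- r) e i) (\prod_(i <- r) f i) y.
Proof.
rewrite /qcommute => fy; elim: r => [|a r IH].
  by rewrite !big_nil expr0z scale1r mulr1 mul1r.
rewrite !big_cons -mulrA IH -scalerAr (mulrA (f a) y) fy -scalerAl scalerA -mulrA.
by rewrite -exprzDr ?unitfE // addrC.
Qed.

Lemma qcommute_prod (I J : Type) (r : seq I) (s : seq J) (e : I -> J -> int)
    (f : I -> A) (g : J -> A) :
  (forall i j, qcommute (e i j) (f i) (g j)) ->
  qcommute (\sum_(i <- r) \sum_(j <- s) e i j)
    (\prod_(i <- r) f i) (\prod_(j <- s) g j).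
Proof. by move=> fg; apply: qcommute_prodl => i; apply: qcommute_prodr. Qed.

End QCommute.

Section Monomials.
Local Set Implicit Arguments.
Local Unset Strict Implicit.
Variables (n : nat) (lam : ideal_triangulation n) (iota : C).
Hypothesis iota_neq0 : iota != 0.
Variables (A : algType C) (Z Zinv : 'I_n -> A).
Hypothesis HZ : CF_relations lam iota Z Zinv.

Lemma zpow_qcommute (i j : 'I_n) (a b : int) :
  qcommute iota (2 * sigma lam i j * (a * b)) (zpow Z Zinv i a) (zpow Z Zinv j b).
Proof.
case: HZ => ZZinv ZinvZ ZZ.
have ij := ZZ i j : qcommute iota (2 * sigma lam i j) (Z i) (Z j).
have ij' := qcommute_invr iota_neq0 (ZZinv j) (ZinvZ j) ij.
have i'j := qcommute_invl iota_neq0 (ZZinv i) (ZinvZ i) ij.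
have i'j' := qcommute_invl iota_neq0 (ZZinv i) (ZinvZ i) ij'.
case: a => m; case: b => p; rewrite /zpow ?NegzE.
- by move: (qcommute_expr m p ij); rewrite PoszM.
- by move: (qcommute_expr m p.+1 ij'); congr qcommute; rewrite PoszM; ring.
- by move: (qcommute_expr m.+1 p i'j); congr qcommute; rewrite PoszM; ring.
- by move: (qcommute_expr m.+1 p.+1 i'j'); congr qcommute; rewrite PoszM; ring.
Qed.

Lemma monomial_qcommute (k l : 'I_n -> int) :
  qcommute iota (\sum_i \sum_j 2 * sigma lam i j * (k i * l j))
    (monomial Z Zinv k) (monomial Z Zinv l).
Proof. by apply: (qcommute_prod iota_neq0) => i j; apply: zpow_qcommute. Qed.

End Monomials.

Lemma sum_ordS_antisym3 (R : comPzRingType) (x y : 'I_3 -> R) :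
  \sum_(c < 3) (x (ordS c) * y c - x c * y (ordS c)) =
  (\sum_(c < 3) x c) * (\sum_(c < 3) y c) - \sum_(c < 3) x c * y c
   - 2 * \sum_(c < 3) x c * y (ordS c).
Proof.
rewrite !big_ord_recl !big_ord0.
have -> : ordS (ord0 : 'I_3) = lift ord0 ord0 by apply/val_inj.
have -> : ordS (lift ord0 ord0 : 'I_3) = lift ord0 (lift ord0 ord0) by apply/val_inj.
have -> : ordS (lift ord0 (lift ord0 ord0) : 'I_3) = ord0 by apply/val_inj.
ring.
Qed.

Section Corners.
Local Set Implicit Arguments.
Local Unset Strict Implicit.
Variables (n : nat) (lam : ideal_triangulation n).

Lemma sum_corners_a_coef (G : 'I_n -> 'I_n -> int) :
  \sum_(p : 'I_(nfaces lam) * 'I_3) G (side lam p.1 (ordS p.2)) (side lam p.1 p.2)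
  = \sum_i \sum_j (a_coef lam i j)%:Z * G i j.
Proof.
rewrite pair_bigA /=.
rewrite (partition_big (fun p => (side lam p.1 (ordS p.2), side lam p.1 p.2)) xpredT) //=.
apply: eq_bigr => -[i j] _ /=.
rewrite (eq_bigr (fun _ => G i j)); last by move=> p /eqP [-> ->].
rewrite (eq_bigl (fun p => p \in [set p : 'I_(nfaces lam) * 'I_3 |
      (side lam p.1 (ordS p.2) == i) && (side lam p.1 p.2 == j)])); last first.
  by move=> p; rewrite inE /= xpair_eqE.
by rewrite sumr_const -mulr_natl natz.
Qed.

Lemma sum_sides_edges_twice (G : 'I_n -> int) : edges_twice lam ->
  \sum_(p : 'I_(nfaces lam) * 'I_3) G (side lam p.1 p.2) = \sum_i 2 * G i.
Proof.
move=> twice; rewrite (partition_big (fun p => side lam p.1 p.2) xpredT) //=.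
apply: eq_bigr => i _.
rewrite (eq_bigr (fun _ => G i)); last by move=> p /eqP ->.
rewrite (eq_bigl (fun p => p \in [set p : 'I_(nfaces lam) * 'I_3 | side lam p.1 p.2 == i]));
  last by move=> p; rewrite inE.
by rewrite sumr_const twice mulr2n; ring.
Qed.

Lemma sigma_form_even (k l : 'I_n -> int) : edges_twice lam -> balanced lam k ->
  (2 %| \sum_i \sum_j sigma lam i j * (k i * l j))%Z.
Proof.
move=> twice bal_k.
have -> : \sum_i \sum_j sigma lam i j * (k i * l j) =
    \sum_i \sum_j (a_coef lam i j)%:Z * (k i * l j) -
    \sum_i \sum_j (a_coef lam i j)%:Z * (k j * l i).
  rewrite [X in _ = _ - X]exchange_big -sumrB; apply: eq_bigr => i _.
  rewrite -sumrB; apply: eq_bigr => j _; rewrite /sigma; ring.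
rewrite -!sum_corners_a_coef -sumrB.
rewrite -(pair_bigA _ (fun f c => k (side lam f (ordS c)) * l (side lam f c)
                                 - k (side lam f c) * l (side lam f (ordS c)))) /=.
under eq_bigr do rewrite sum_ordS_antisym3.
rewrite !sumrB -mulr_sumr; apply: rpredB; last exact/dvdz_mulr/dvdzz.
apply: rpredB; first by apply: rpred_sum => f _; apply/dvdz_mulr/bal_k.
rewrite (pair_bigA _ (fun f c => k (side lam f c) * l (side lam f c))) /=.
rewrite (sum_sides_edges_twice (fun i => k i * l i) twice).
by apply: rpred_sum => i _; apply/dvdz_mulr/dvdzz.
Qed.

End Corners.

Section BalancedCF.
Local Set Implicit Arguments.
Local Unset Strict Implicit.
Variables (n : nat) (lam : ideal_triangulation n) (iota : C).
Variables (A : algType C) (Z Zinv : 'I_n -> A).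
Hypotheses (twice : edges_twice lam) (iota4 : iota ^+ 4 = 1).
Hypothesis HZ : CF_relations lam iota Z Zinv.

Lemma balanced_monomial_comm (k l : 'I_n -> int) : balanced lam k ->
  monomial Z Zinv k * monomial Z Zinv l = monomial Z Zinv l * monomial Z Zinv k.
Proof.
move=> bal_k.
have iota_neq0 : iota != 0.
  by apply: contra_eq_neq iota4 => ->; rewrite expr0n eq_sym oner_neq0.
rewrite (monomial_qcommute iota_neq0 HZ).
have [s Hs] := dvdzP (sigma_form_even l twice bal_k).
have -> : \sum_i \sum_j 2 * sigma lam i j * (k i * l j) = 4 * s.
  rewrite (_ : 4 * s = 2 * (s * 2)); last by ring.
  rewrite -Hs mulr_sumr; apply: eq_bigr => i _.
  by rewrite mulr_sumr; apply: eq_bigr => j _; ring.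
by rewrite -exprz_exp -[iota ^ 4]/(iota ^+ 4) iota4 exp1rz scale1r.
Qed.

Lemma in_balanced_CF_comm (z : A) :
  (forall k, balanced lam k -> monomial Z Zinv k * z = z * monomial Z Zinv k) ->
  forall x, in_balanced_CF lam Z Zinv x -> x * z = z * x.
Proof.
move=> mono_z x; elim=> {x}.
- exact: mono_z.
- by move=> c; rewrite -scalerAl mul1r -scalerAr mulr1.
- by move=> x y _ xz _ yz; rewrite mulrDl mulrDr xz yz.
- by move=> x y _ xz _ yz; rewrite -mulrA yz mulrA xz mulrA.
- by move=> c x _ xz; rewrite -scalerAl xz scalerAr.
Qed.

End BalancedCF.

Theorem corollary3p3 (n : nat) (lam : ideal_triangulation n)
    (Hlam : is_ideal_triangulation lam) (iota : C) (Hiota : iota ^+ 4 = 1)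
    (A : algType C) (Z Zinv : 'I_n -> A)
    (HZ : CF_relations lam iota Z Zinv) :
  forall x y : A, in_balanced_CF lam Z Zinv x -> in_balanced_CF lam Z Zinv y ->
    x * y = y * x.
Proof.
case: Hlam => twice _ _ x y Hx Hy.
apply: (in_balanced_CF_comm _ Hx) => k bal_k.
symmetry; apply: (in_balanced_CF_comm _ Hy) => l _.
by rewrite (balanced_monomial_comm twice Hiota HZ l bal_k).
Qed.
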